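(* For every 2-qubit pure state $\rho$, its posterior $\chi^2$ divergence information content satisfies $I_{\chi^2,post}(\rho)\le 2$, and the value $2$ is attained by some 2-qubit pure state. In other words, the upper bound on the posterior information content of the 2-qubit pure state system is exactly $2$.
   Context: Let $\sigma_1=\begin{pmatrix}0&1\\1&0\end{pmatrix}$, $\sigma_2=\begin{pmatrix}0&-i\\i&0\end{pmatrix}$, $\sigma_3=\begin{pmatrix}1&0\\0&-1\end{pmatrix}$. For a 2-qubit density matrix $\rho$ its Bloch vector is $(b_1,\dots,b_{16})$, where $b_1=\operatorname{tr}\rho=1$; $(b_2,b_3,b_4)=\boldsymbol{\alpha}$ with $\alpha_j=\operatorname{tr}((\sigma_j\otimes I)\rho)$; $(b_5,b_6,b_7)=\boldsymbol{\beta}$ with $\beta_j=\operatorname{tr}((I\otimes\sigma_j)\rho)$; and $(b_8,\dots,b_{16})$ are the entries $C_{jk}=\operatorname{tr}((\sigma_j\otimes\sigma_k)\rho)$ of the $3\times3$ correlation matrix $C$ listed in row-major order. A pure state is $\rho=|\psi\rangle\langle\psi|$ with $|\psi\rangle\in\mathbb{C}^2\otimes\mathbb{C}^2$ a unit vector. For $b\in[-1,1]$ and $h\in(-1,1)$ define $D_{\chi^2}(b,h)=\frac{((b+1)/2)^2}{(h+1)/2}+\frac{((1-b)/2)^2}{(1-h)/2}-1$; if $h=\pm1$ and $b=h$, set $D_{\chi^2}(b,h)=0$. The posterior $\chi^2$ divergence information content of a 2-qubit pure state with Bloch vector $(b_1,\dots,b_{16})$ is defined as follows. For each $i=2,\dots,16$,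 let $b_i^{max}$ and $b_i^{min}$ be the maximum and the minimum of the $i$-th Bloch component over all 2-qubit pure states whose Bloch components $1,\dots,i-1$ coincide with $b_1,\dots,b_{i-1}$. Put $h_i=(b_i^{max}+b_i^{min})/2$. Then $I_{\chi^2,post}=\sum_{i=2}^{16}D_{\chi^2}(b_i,h_i)$. *)

From HB Require Import structures.
From mathcomp Require Import all_boot all_order all_algebra.
From mathcomp Require Import complex.
From mathcomp Require Import all_classical all_reals.
Set Implicit Arguments. Unset Strict Implicit. Unset Printing Implicit Defensive.
Import Order.TTheory GRing.Theory Num.Theory ComplexField.
Local Open Scope ring_scope.
Local Open Scope classical_set_scope.

Section TwoQubit.
Variable R : realType.
Local Notation C := R[i].

(* sigma 0 = identity, sigma 1,2,3 = Pauli matrices, indexed by 'I_2 x 'I_2 *)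
Definition sigma (j : nat) (a b : 'I_2) : C :=
  match j with
  | 0%N => if a == b then 1 else 0
  | 1%N => if a == b then 0 else 1
  | 2%N => if a == b then 0 else if val a == 0%N then - 'i else 'i
  | 3%N => if a == b then (if val a == 0%N then 1 else -1) else 0
  | _ => 0
  end.

(* a vector of C^2 (x) C^2, with amplitude psi a b on |a>|b> *)
Definition qvec := 'I_2 -> 'I_2 -> C.

Definition is_pure (psi : qvec) : Prop :=
  \sum_(a < 2) \sum_(b < 2) psi a b * (psi a b)^* = 1.

(* density matrix rho = |psi><psi|, entry ((a,b),(c,d)) *)
Definition rho (psi : qvec) (a b c d : 'I_2) : C := psi a b * (psi c d)^*.

(* tr((sigma_j (x) sigma_k) rho) *)
Definition tr_obs (j k : nat) (psi : qvec) : C :=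
  \sum_(a < 2) \sum_(b < 2) \sum_(c < 2) \sum_(d < 2)
     (sigma j a c * sigma k b d) * rho psi c d a b.

Definition bloch_obs (i : nat) : nat * nat :=
  if i == 1%N then (0%N, 0%N)
  else if (2 <= i <= 4)%N then ((i - 1)%N, 0%N)
  else if (5 <= i <= 7)%N then (0%N, (i - 4)%N)
  else (((i - 8) %/ 3).+1, ((i - 8) %% 3).+1).

(* Bloch component b_i (1 <= i <= 16); traces of Hermitian operators
   against rho are real, we take the real part. *)
Definition bloch (psi : qvec) (i : nat) : R :=
  complex.Re (tr_obs (bloch_obs i).1 (bloch_obs i).2 psi).

Definition Dchi2 (b h : R) : R :=
  if ((h == 1) || (h == -1)) && (b == h) then 0
  else ((b + 1) / 2) ^+ 2 / ((h + 1) / 2) + ((1 - b) / 2) ^+ 2 / ((1 - h) / 2) - 1.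

Definition compat_values (psi : qvec) (i : nat) : set R :=
  [set bloch phi i | phi in [set phi | is_pure phi /\
      (forall k, (1 <= k < i)%N -> bloch phi k = bloch psi k)]].

Definition bmax (psi : qvec) (i : nat) : R := sup (compat_values psi i).
Definition bmin (psi : qvec) (i : nat) : R := inf (compat_values psi i).
Definition hmid (psi : qvec) (i : nat) : R := (bmax psi i + bmin psi i) / 2.

Definition I_chi2_post (psi : qvec) : R :=
  \sum_(2 <= i < 17) Dchi2 (bloch psi i) (hmid psi i).

End TwoQubit.

From HB Require Import structures.
From mathcomp Require Import all_boot all_order all_algebra.
From mathcomp Require Import complex.
From mathcomp Require Import all_classical all_reals.
Import Order.TTheory GRing.Theory Num.Theory.
Local Open Scope ring_scope.
From mathcomp Require Import ring lra.
Set Implicit Arguments. Unset Strict Implicit. Unset Printing Implicit Defensive.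

(* In real coordinates every Bloch component of psi is a real quadratic form. For
   2 <= i <= 16 the values of b_i compatible with b_1, ..., b_(i-1) lie in [-1, 1]
   and are symmetric about an explicit centre c_i(b_1, ..., b_(i-1)): a Pauli
   rotation of one qubit, possibly combined with the spin flip and a rescaling,
   fixes the earlier components and reflects b_i about c_i. Hence h_i = c_i.
   The local components have centre 0 and contribute |alpha|^2 + |beta|^2
   = 2 |alpha|^2. The third row of C, and the second one unless
   alpha_2 = alpha_3 = 0, is determined by the earlier components and contributes
   nothing; otherwise a row ranges over the section of a sphere by a plane, and
   projecting coordinate by coordinate bounds its contribution by 1 - |alpha|^2.
   So the total is at most 2, with equality for (|00> + |01> + |10> - |11>) / 2. *)

Ltac field_nz := field; do ?[apply/andP; split]; try done; try assumption.

Section RealFacts.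
Variable R : realType.
Implicit Types (x y z wx wy wz : R).

Lemma sqr_add2_eq0 x y : x ^+ 2 + y ^+ 2 = 0 -> x = 0 /\ y = 0.
Proof. by move/eqP; rewrite paddr_eq0 ?sqr_ge0 // !sqrf_eq0 => /andP[/eqP-> /eqP->]. Qed.

Lemma sqr_add3_eq0 x y z : x ^+ 2 + y ^+ 2 + z ^+ 2 = 0 -> [/\ x = 0, y = 0 & z = 0].
Proof.
move/eqP; rewrite paddr_eq0 ?addr_ge0 ?sqr_ge0 // sqrf_eq0.
by case/andP=> /eqP/sqr_add2_eq0[-> ->] /eqP->.
Qed.

Lemma sqr_dot2_le y z wy wz : (y * wy + z * wz) ^+ 2 <= (y ^+ 2 + z ^+ 2) * (wy ^+ 2 + wz ^+ 2).
Proof.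
have -> : (y ^+ 2 + z ^+ 2) * (wy ^+ 2 + wz ^+ 2)
          = (y * wy + z * wz) ^+ 2 + (y * wz - z * wy) ^+ 2 by ring.
by rewrite lerDl sqr_ge0.
Qed.

Lemma sqr_dot3_le x y z wx wy wz :
  (x * wx + y * wy + z * wz) ^+ 2
  <= (x ^+ 2 + y ^+ 2 + z ^+ 2) * (wx ^+ 2 + wy ^+ 2 + wz ^+ 2).
Proof.
have -> : (x ^+ 2 + y ^+ 2 + z ^+ 2) * (wx ^+ 2 + wy ^+ 2 + wz ^+ 2)
          = (x * wx + y * wy + z * wz) ^+ 2
            + ((x * wy - y * wx) ^+ 2 + (x * wz - z * wx) ^+ 2 + (y * wz - z * wy) ^+ 2).
  by ring.
by rewrite lerDl !addr_ge0 ?sqr_ge0.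
Qed.

Local Open Scope classical_set_scope.

Lemma sup_add_inf_sym (S : set R) (c : R) : S !=set0 -> has_ubound S ->
  (forall v, S v -> S (2 * c - v)) -> sup S + inf S = 2 * c.
Proof.
move=> S0 [M SM] Ssym.
have Slb : has_lbound S.
  by exists (2 * c - M) => v /Ssym /SM; rewrite lerBlDr addrC -lerBlDr.
have sup_le : sup S <= 2 * c - inf S.
  by apply: ge_sup => // v /Ssym /(ge_inf Slb); rewrite lerBrDr addrC -lerBrDr.
have le_inf : 2 * c - sup S <= inf S.
  apply: lb_le_inf => // v /Ssym /(ub_le_sup (ex_intro _ M SM)).
  by rewrite lerBlDr addrC -lerBlDr.
lra.
Qed.

End RealFacts.

Section ChiSquare.
Variable R : realType.
Implicit Types (a b h k w x y z L Q wx wy wz : R).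

Lemma Dchi2E b h : h ^+ 2 < 1 -> Dchi2 b h = (b - h) ^+ 2 / (1 - h ^+ 2).
Proof.
move=> h1; rewrite /Dchi2.
have hp : h + 1 != 0.
  by apply: contraTneq h1 => /eqP; rewrite addr_eq0 => /eqP->; rewrite sqrrN expr1n ltxx.
have hm : 1 - h != 0.
  by apply: contraTneq h1 => /eqP; rewrite subr_eq0 => /eqP<-; rewrite expr1n ltxx.
have hh : 1 - h ^+ 2 != 0 by rewrite subr_eq0 eq_sym lt_eqF.
case: ifP => [/andP[/orP[] /eqP h_pm1 _]|_]; last by field_nz.
  by rewrite h_pm1 expr1n ltxx in h1.
by rewrite h_pm1 sqrrN expr1n ltxx in h1.
Qed.

Lemma Dchi2_0 b : Dchi2 b 0 = b ^+ 2.
Proof.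
rewrite Dchi2E; last by rewrite expr0n ltr01.
by rewrite expr0n /= !subr0 divr1.
Qed.

Lemma Dchi2_id x : Dchi2 x x = 0.
Proof.
rewrite /Dchi2; case: ifP => // /negbT x_pm1.
have x1 : 1 - x != 0.
  by apply: contraNneq x_pm1 => /eqP; rewrite subr_eq0 => /eqP<-; rewrite eqxx.
have x2 : x + 1 != 0.
  by apply: contraNneq x_pm1 => /eqP; rewrite addr_eq0 => /eqP->; rewrite !eqxx orbT.
by field_nz.
Qed.

Lemma Dchi2_le b h L : 0 < L -> L <= 1 - h ^+ 2 -> Dchi2 b h <= (b - h) ^+ 2 / L.
Proof.
move=> L0 hL; rewrite Dchi2E; last by lra.
by rewrite ler_wpM2l ?sqr_ge0 // lef_pV2 ?posrE //; lra.
Qed.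

(* For a point v = (x, v') of a sphere with v . (a, w') = k and |w'|^2 = Q, the
   range of x is centred at a k / (a^2 + Q), and v' satisfies v' . w' = k - a x.
   The right-hand side is the drop of |v|^2 - k^2 / (a^2 + Q) when passing to
   |v'|^2 - (k - a x)^2 / Q, so these bounds telescope along the coordinates. *)
Lemma Dchi2_proj_le x a k Q : 0 <= Q -> k ^+ 2 <= a ^+ 2 + Q -> (Q = 0 -> a * x = k) ->
  Dchi2 x (a * k / (a ^+ 2 + Q)) <= x ^+ 2 + (k - a * x) ^+ 2 / Q - k ^+ 2 / (a ^+ 2 + Q).
Proof.
move=> Q0 kQ; have [-> /(_ erefl) <-|Qneq0 _] := eqVneq Q 0.
  rewrite addr0 subrr expr0n /= invr0 mulr0 addr0.
  have [-> | a0] := eqVneq a 0; first by rewrite !mul0r Dchi2_0 expr0n /= invr0 !mulr0 subr0.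
  have -> : a * (a * x) / a ^+ 2 = x by field_nz.
  have -> : (a * x) ^+ 2 / a ^+ 2 = x ^+ 2 by field_nz.
  by rewrite Dchi2_id subrr.
have Qpos : 0 < Q by rewrite lt_def Qneq0.
have W0 : 0 < a ^+ 2 + Q by rewrite ltr_wpDl ?sqr_ge0.
have W0' : a ^+ 2 + Q != 0 by rewrite gt_eqF.
apply: le_trans (Dchi2_le _ (_ : 0 < Q / (a ^+ 2 + Q)) _) _; first exact: divr_gt0.
  rewrite -subr_ge0 (_ : _ - _ = a ^+ 2 * (a ^+ 2 + Q - k ^+ 2) / (a ^+ 2 + Q) ^+ 2).
    by rewrite divr_ge0 ?sqr_ge0 // mulr_ge0 ?sqr_ge0 // subr_ge0.
  by field_nz.
by rewrite le_eqVlt; apply/orP; left; apply/eqP; field_nz.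
Qed.

(* For w = 0 the centre z * w / w is 0, as x / 0 = 0. *)
Lemma Dchi2_last z w : Dchi2 z (z * w / w) + (z * w) ^+ 2 / w ^+ 2 = z ^+ 2.
Proof.
have [->|w0] := eqVneq w 0; first by rewrite !mulr0 mul0r Dchi2_0 expr0n /= mul0r addr0.
by rewrite mulrK ?unitfE // Dchi2_id add0r; field_nz.
Qed.

Lemma Dchi2_plane_le y z wy wz k : y * wy + z * wz = k -> y ^+ 2 + z ^+ 2 <= 1 ->
  Dchi2 y (wy * k / (wy ^+ 2 + wz ^+ 2)) + Dchi2 z ((k - wy * y) / wz)
  <= y ^+ 2 + z ^+ 2 - k ^+ 2 / (wy ^+ 2 + wz ^+ 2).
Proof.
move=> yzk yz1.
have kz : k - wy * y = z * wz by rewrite -yzk; ring.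
have := Dchi2_last z wz; rewrite -kz => last_eq.
have : Dchi2 y (wy * k / (wy ^+ 2 + wz ^+ 2))
       <= y ^+ 2 + (k - wy * y) ^+ 2 / wz ^+ 2 - k ^+ 2 / (wy ^+ 2 + wz ^+ 2).
  apply: Dchi2_proj_le; first exact: sqr_ge0.
    rewrite -yzk; apply: le_trans (sqr_dot2_le _ _ _ _) _.
    by rewrite ler_piMl ?addr_ge0 ?sqr_ge0.
  by move=> /eqP; rewrite sqrf_eq0 => /eqP wz0; rewrite -yzk wz0 mulr0 addr0 mulrC.
lra.
Qed.

Lemma Dchi2_sphere_le x y z wx wy wz k :
  x * wx + y * wy + z * wz = k -> x ^+ 2 + y ^+ 2 + z ^+ 2 <= 1 ->
  Dchi2 x (wx * k / (wx ^+ 2 + wy ^+ 2 + wz ^+ 2))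
  + Dchi2 y (wy * (k - wx * x) / (wy ^+ 2 + wz ^+ 2))
  + Dchi2 z ((k - wx * x - wy * y) / wz)
  <= x ^+ 2 + y ^+ 2 + z ^+ 2 - k ^+ 2 / (wx ^+ 2 + wy ^+ 2 + wz ^+ 2).
Proof.
move=> xyzk xyz1.
have yzk : y * wy + z * wz = k - wx * x by rewrite -xyzk; ring.
have yz1 : y ^+ 2 + z ^+ 2 <= 1 by have := sqr_ge0 x; lra.
have plane := Dchi2_plane_le yzk yz1.
have : Dchi2 x (wx * k / (wx ^+ 2 + (wy ^+ 2 + wz ^+ 2)))
       <= x ^+ 2 + (k - wx * x) ^+ 2 / (wy ^+ 2 + wz ^+ 2)
          - k ^+ 2 / (wx ^+ 2 + (wy ^+ 2 + wz ^+ 2)).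
  apply: Dchi2_proj_le; first by rewrite addr_ge0 ?sqr_ge0.
    rewrite addrA -xyzk; apply: le_trans (sqr_dot3_le _ _ _ _ _ _) _.
    by rewrite ler_piMl ?addr_ge0 ?sqr_ge0.
  by case/sqr_add2_eq0 => wy0 wz0; rewrite -xyzk wy0 wz0 !mulr0 !addr0 mulrC.
by rewrite !addrA; lra.
Qed.

End ChiSquare.

Section Coordinates.
Variable R : realType.
Local Notation C := R[i].

Record coords := Coords {
  re00 : R; re01 : R; re10 : R; re11 : R; im00 : R; im01 : R; im10 : R; im11 : R }.

Definition norm2 (s : coords) : R :=
  let: Coords x0 x1 x2 x3 y0 y1 y2 y3 := s in
  x0 ^+ 2 + x1 ^+ 2 + x2 ^+ 2 + x3 ^+ 2 + y0 ^+ 2 + y1 ^+ 2 + y2 ^+ 2 + y3 ^+ 2.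

Definition bvec (s : coords) (i : nat) : R :=
  let: Coords x0 x1 x2 x3 y0 y1 y2 y3 := s in
  match i with
  | 1%N => norm2 s
  | 2%N => 2 * (x0 * x2 + x1 * x3 + y0 * y2 + y1 * y3)
  | 3%N => 2 * (x0 * y2 + x1 * y3 - x2 * y0 - x3 * y1)
  | 4%N => x0 ^+ 2 + x1 ^+ 2 - x2 ^+ 2 - x3 ^+ 2 + y0 ^+ 2 + y1 ^+ 2 - y2 ^+ 2 - y3 ^+ 2
  | 5%N => 2 * (x0 * x1 + x2 * x3 + y0 * y1 + y2 * y3)
  | 6%N => 2 * (x0 * y1 - x1 * y0 + x2 * y3 - x3 * y2)
  | 7%N => x0 ^+ 2 - x1 ^+ 2 + x2 ^+ 2 - x3 ^+ 2 + y0 ^+ 2 - y1 ^+ 2 + y2 ^+ 2 - y3 ^+ 2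
  | 8%N => 2 * (x0 * x3 + x1 * x2 + y0 * y3 + y1 * y2)
  | 9%N => 2 * (x0 * y3 - x1 * y2 + x2 * y1 - x3 * y0)
  | 10%N => 2 * (x0 * x2 - x1 * x3 + y0 * y2 - y1 * y3)
  | 11%N => 2 * (x0 * y3 + x1 * y2 - x2 * y1 - x3 * y0)
  | 12%N => 2 * (x1 * x2 - x0 * x3 + y1 * y2 - y0 * y3)
  | 13%N => 2 * (x0 * y2 - x1 * y3 - x2 * y0 + x3 * y1)
  | 14%N => 2 * (x0 * x1 - x2 * x3 + y0 * y1 - y2 * y3)
  | 15%N => 2 * (x0 * y1 - x1 * y0 - x2 * y3 + x3 * y2)
  | 16%N => x0 ^+ 2 - x1 ^+ 2 - x2 ^+ 2 + x3 ^+ 2 + y0 ^+ 2 - y1 ^+ 2 - y2 ^+ 2 + y3 ^+ 2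
  | _ => 0
  end.

Definition coords_of (psi : qvec R) : coords :=
  Coords (complex.Re (psi ord0 ord0)) (complex.Re (psi ord0 ord_max))
         (complex.Re (psi ord_max ord0)) (complex.Re (psi ord_max ord_max))
         (complex.Im (psi ord0 ord0)) (complex.Im (psi ord0 ord_max))
         (complex.Im (psi ord_max ord0)) (complex.Im (psi ord_max ord_max)).

Definition qvec_of (s : coords) : qvec R := fun a b =>
  let: Coords x0 x1 x2 x3 y0 y1 y2 y3 := s in
  if val a == 0%N then (if val b == 0%N then (x0 +i* y0)%C else (x1 +i* y1)%C)
  else (if val b == 0%N then (x2 +i* y2)%C else (x3 +i* y3)%C).

Lemma qvec_ofK : cancel qvec_of coords_of.
Proof. by case. Qed.

Lemma sum_ord2 (F : 'I_2 -> C) : \sum_(a < 2) F a = F ord0 + F ord_max.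
Proof. by rewrite big_ord_recl big_ord1; congr (_ + F _); apply: val_inj. Qed.

Lemma conj_complexE (a b : R) : ((a +i* b)%C)^* = (a -i* b)%C.
Proof. by []. Qed.

Lemma bloch_bvec psi i : (0 < i <= 16)%N -> bloch psi i = bvec (coords_of psi) i.
Proof.
case: i => [|[|[|[|[|[|[|[|[|[|[|[|[|[|[|[|[|i]]]]]]]]]]]]]]]]] // _.
all: rewrite /bloch /bloch_obs /= /tr_obs /rho !sum_ord2 /sigma /= /coords_of /norm2.
all: rewrite ?(mul0r, mulr0, add0r, addr0, mul1r, mulr1).
all: case: (psi ord0 ord0) => [a0 b0]; case: (psi ord0 ord_max) => [a1 b1].
all: case: (psi ord_max ord0) => [a2 b2]; case: (psi ord_max ord_max) => [a3 b3].
all: rewrite !conj_complexE; simpc; rewrite /=; ring.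
Qed.

Lemma is_pureE psi : is_pure psi <-> norm2 (coords_of psi) = 1.
Proof.
rewrite /is_pure !sum_ord2 /coords_of /norm2 /=.
case: (psi ord0 ord0) => [a0 b0]; case: (psi ord0 ord_max) => [a1 b1].
case: (psi ord_max ord0) => [a2 b2]; case: (psi ord_max ord_max) => [a3 b3].
rewrite !conj_complexE; simpc => /=; split => [[<- _]|n1]; first by ring.
by apply/eqP; rewrite eq_complex /= -n1; apply/andP; split; apply/eqP; ring.
Qed.

End Coordinates.

Section PureRelations.
Variable R : realType.
Implicit Types (s : coords R) (b : nat -> R).

Definition alpha_norm2 b := b 2%N ^+ 2 + b 3%N ^+ 2 + b 4%N ^+ 2.
Definition beta_norm2 b := b 5%N ^+ 2 + b 6%N ^+ 2 + b 7%N ^+ 2.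
Definition alpha23_norm2 b := b 3%N ^+ 2 + b 4%N ^+ 2.

(* With C the correlation matrix: C beta = alpha, C^T alpha = beta,
   C C^T = (1 - |alpha|^2) I + alpha alpha^T, |alpha| = |beta| <= 1,
   C_3 = alpha_3 beta - C_1 x C_2 and
   (alpha_2^2 + alpha_3^2) C_2 = alpha_2 beta - alpha_3 (beta x C_1) - alpha_1 alpha_2 C_1,
   where C_j is the j-th row of C; only some components are recorded. *)
Record pure_relations b : Prop := PureRelations {
  pure_norm : b 1%N = 1;
  C_beta1 : b 8%N * b 5%N + b 9%N * b 6%N + b 10%N * b 7%N = b 2%N;
  CT_alpha2 : b 9%N * b 2%N + b 12%N * b 3%N + b 15%N * b 4%N = b 6%N;
  CT_alpha3 : b 10%N * b 2%N + b 13%N * b 3%N + b 16%N * b 4%N = b 7%N;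
  CCT11 : b 8%N ^+ 2 + b 9%N ^+ 2 + b 10%N ^+ 2 = 1 - alpha_norm2 b + b 2%N ^+ 2;
  CCT22 : b 11%N ^+ 2 + b 12%N ^+ 2 + b 13%N ^+ 2 = 1 - alpha_norm2 b + b 3%N ^+ 2;
  CCT33 : b 14%N ^+ 2 + b 15%N ^+ 2 + b 16%N ^+ 2 = 1 - alpha_norm2 b + b 4%N ^+ 2;
  CCT12 : b 8%N * b 11%N + b 9%N * b 12%N + b 10%N * b 13%N = b 2%N * b 3%N;
  alpha_beta_norm2 : alpha_norm2 b = beta_norm2 b;
  alpha_norm2_le1 : alpha_norm2 b <= 1;
  row3_1 : b 14%N = b 4%N * b 5%N - (b 9%N * b 13%N - b 10%N * b 12%N);
  row3_2 : b 15%N = b 4%N * b 6%N - (b 10%N * b 11%N - b 8%N * b 13%N);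
  row3_3 : b 16%N = b 4%N * b 7%N - (b 8%N * b 12%N - b 9%N * b 11%N);
  row2_1 : alpha23_norm2 b * b 11%N
           = b 3%N * b 5%N - b 4%N * (b 6%N * b 10%N - b 7%N * b 9%N) - b 2%N * b 3%N * b 8%N;
  row2_2 : alpha23_norm2 b * b 12%N
           = b 3%N * b 6%N - b 4%N * (b 7%N * b 8%N - b 5%N * b 10%N) - b 2%N * b 3%N * b 9%N;
  row2_3 : alpha23_norm2 b * b 13%N
           = b 3%N * b 7%N - b 4%N * (b 5%N * b 9%N - b 6%N * b 8%N) - b 2%N * b 3%N * b 10%N
}.

Lemma bvec_pure s : norm2 s = 1 -> pure_relations (bvec s).
Proof.
move=> n1.
(* Each relation becomes a polynomial identity once its lower-degree terms are
   multiplied by a power of norm2 s = 1. *)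
have homogR p q : p = q * norm2 s -> p = q by rewrite n1 mulr1.
have homogL p q : p * norm2 s = q -> p = q by rewrite n1 mulr1.
have homogCCT p q r : p = norm2 s ^+ 2 - q + r -> p = 1 - q + r by rewrite n1 expr1n.
have homog_row2 p q r t : p = q * norm2 s - r - t -> p = q - r - t by rewrite n1 mulr1.
have homog_le p q : p = norm2 s ^+ 2 - q -> 0 <= q -> p <= 1.
  by move=> -> q0; rewrite n1 expr1n lerBlDr lerDl.
case: s n1 homogR homogL homogCCT homog_row2 homog_le
  => x0 x1 x2 x3 y0 y1 y2 y3 n1 homogR homogL homogCCT homog_row2 homog_le.
constructor; rewrite /alpha_norm2 /beta_norm2 /alpha23_norm2 /=.
- exact: n1.
- by apply: homogR; rewrite /= /norm2; ring.
- by apply: homogR; rewrite /= /norm2; ring.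
- by apply: homogR; rewrite /= /norm2; ring.
- by apply: homogCCT; rewrite /= /norm2; ring.
- by apply: homogCCT; rewrite /= /norm2; ring.
- by apply: homogCCT; rewrite /= /norm2; ring.
- ring.
- ring.
- (* |alpha|^2 = 1 - 4 |det psi|^2, with psi read as a 2x2 matrix *)
  apply: (homog_le _ (4 * ((x0 * x3 - y0 * y3 - (x1 * x2 - y1 * y2)) ^+ 2
                           + (x0 * y3 + y0 * x3 - (x1 * y2 + y1 * x2)) ^+ 2))).
    by rewrite /= /norm2; ring.
  by rewrite mulr_ge0 ?addr_ge0 ?sqr_ge0.
- by apply: homogL; rewrite /= /norm2; ring.
- by apply: homogL; rewrite /= /norm2; ring.
- by apply: homogL; rewrite /= /norm2; ring.
- by apply: homog_row2; rewrite /= /norm2; ring.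
- by apply: homog_row2; rewrite /= /norm2; ring.
- by apply: homog_row2; rewrite /= /norm2; ring.
Qed.

Lemma pure_relations_le1 b i : pure_relations b -> (2 <= i <= 16)%N -> -1 <= b i <= 1.
Proof.
move=> P i_range; suff b1 : b i ^+ 2 <= 1 by apply/andP; split; nra.
move: P i_range; case=> _ _ _ _ + + + _ + + _ _ _ _ _ _; rewrite /alpha_norm2 /beta_norm2.
have s k := sqr_ge0 (b k).
case: i => [|[|[|[|[|[|[|[|[|[|[|[|[|[|[|[|[|i]]]]]]]]]]]]]]]]] //= C11 C22 C33 ab a1 _.
all: have := s 2%N; have := s 3%N; have := s 4%N; have := s 5%N; have := s 6%N.
all: have := s 7%N; have := s 8%N; have := s 9%N; have := s 10%N; have := s 11%N.
all: have := s 12%N; have := s 13%N; have := s 14%N; have := s 15%N; have := s 16%N.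
all: lra.
Qed.

End PureRelations.

Section LocalOperations.
Variable R : realType.
Implicit Types (s : coords R) (b : nat -> R).

(* (n1 sigma_1 + n2 sigma_2 + n3 sigma_3) (x) I, resp. I (x) (...), applied to psi *)
Definition pauliA (n1 n2 n3 : R) s : coords R :=
  let: Coords x0 x1 x2 x3 y0 y1 y2 y3 := s in
  Coords (n3 * x0 + n1 * x2 + n2 * y2) (n3 * x1 + n1 * x3 + n2 * y3)
         (n1 * x0 - n2 * y0 - n3 * x2) (n1 * x1 - n2 * y1 - n3 * x3)
         (n3 * y0 + n1 * y2 - n2 * x2) (n3 * y1 + n1 * y3 - n2 * x3)
         (n1 * y0 + n2 * x0 - n3 * y2) (n1 * y1 + n2 * x1 - n3 * y3).

Definition pauliB (n1 n2 n3 : R) s : coords R :=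
  let: Coords x0 x1 x2 x3 y0 y1 y2 y3 := s in
  Coords (n3 * x0 + n1 * x1 + n2 * y1) (n1 * x0 - n2 * y0 - n3 * x1)
         (n3 * x2 + n1 * x3 + n2 * y3) (n1 * x2 - n2 * y2 - n3 * x3)
         (n3 * y0 + n1 * y1 - n2 * x1) (n1 * y0 + n2 * x0 - n3 * y1)
         (n3 * y2 + n1 * y3 - n2 * x3) (n1 * y2 + n2 * x2 - n3 * y3).

(* psi |-> (sigma_2 (x) sigma_2) conj psi *)
Definition spin_flip s : coords R :=
  let: Coords x0 x1 x2 x3 y0 y1 y2 y3 := s in
  Coords (- x3) x2 x1 (- x0) y3 (- y2) (- y1) y0.

Definition scale (l : R) s : coords R :=
  let: Coords x0 x1 x2 x3 y0 y1 y2 y3 := s in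
  Coords (l * x0) (l * x1) (l * x2) (l * x3) (l * y0) (l * y1) (l * y2) (l * y3).

(* Conjugation by n . sigma maps a Pauli vector v to 2 (n . v) n - |n|^2 v: reflA
   acts so on alpha and on the columns of C, reflB on beta and on the rows of C. *)
Definition reflA (n1 n2 n3 : R) b (i : nat) : R :=
  let nn := n1 ^+ 2 + n2 ^+ 2 + n3 ^+ 2 in
  let refl v1 v2 v3 nj vi := 2 * (n1 * v1 + n2 * v2 + n3 * v3) * nj - nn * vi in
  match i with
  | 2%N => refl (b 2%N) (b 3%N) (b 4%N) n1 (b 2%N)
  | 3%N => refl (b 2%N) (b 3%N) (b 4%N) n2 (b 3%N)
  | 4%N => refl (b 2%N) (b 3%N) (b 4%N) n3 (b 4%N)
  | 8%N => refl (b 8%N) (b 11%N) (b 14%N) n1 (b 8%N)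
  | 9%N => refl (b 9%N) (b 12%N) (b 15%N) n1 (b 9%N)
  | 10%N => refl (b 10%N) (b 13%N) (b 16%N) n1 (b 10%N)
  | 11%N => refl (b 8%N) (b 11%N) (b 14%N) n2 (b 11%N)
  | 12%N => refl (b 9%N) (b 12%N) (b 15%N) n2 (b 12%N)
  | 13%N => refl (b 10%N) (b 13%N) (b 16%N) n2 (b 13%N)
  | 14%N => refl (b 8%N) (b 11%N) (b 14%N) n3 (b 14%N)
  | 15%N => refl (b 9%N) (b 12%N) (b 15%N) n3 (b 15%N)
  | 16%N => refl (b 10%N) (b 13%N) (b 16%N) n3 (b 16%N)
  | _ => nn * b i
  end.

Definition reflB (n1 n2 n3 : R) b (i : nat) : R :=
  let nn := n1 ^+ 2 + n2 ^+ 2 + n3 ^+ 2 in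
  let refl v1 v2 v3 nj vi := 2 * (n1 * v1 + n2 * v2 + n3 * v3) * nj - nn * vi in
  match i with
  | 5%N => refl (b 5%N) (b 6%N) (b 7%N) n1 (b 5%N)
  | 6%N => refl (b 5%N) (b 6%N) (b 7%N) n2 (b 6%N)
  | 7%N => refl (b 5%N) (b 6%N) (b 7%N) n3 (b 7%N)
  | 8%N => refl (b 8%N) (b 9%N) (b 10%N) n1 (b 8%N)
  | 9%N => refl (b 8%N) (b 9%N) (b 10%N) n2 (b 9%N)
  | 10%N => refl (b 8%N) (b 9%N) (b 10%N) n3 (b 10%N)
  | 11%N => refl (b 11%N) (b 12%N) (b 13%N) n1 (b 11%N)
  | 12%N => refl (b 11%N) (b 12%N) (b 13%N) n2 (b 12%N)
  | 13%N => refl (b 11%N) (b 12%N) (b 13%N) n3 (b 13%N)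
  | 14%N => refl (b 14%N) (b 15%N) (b 16%N) n1 (b 14%N)
  | 15%N => refl (b 14%N) (b 15%N) (b 16%N) n2 (b 15%N)
  | 16%N => refl (b 14%N) (b 15%N) (b 16%N) n3 (b 16%N)
  | _ => nn * b i
  end.

Definition flip_local b (i : nat) : R := if (2 <= i <= 7)%N then - b i else b i.

Lemma bvec_pauliA n1 n2 n3 s : bvec (pauliA n1 n2 n3 s) = reflA n1 n2 n3 (bvec s).
Proof.
apply: boolp.funext; case: s => * [|[|[|[|[|[|[|[|[|[|[|[|[|[|[|[|[|i]]]]]]]]]]]]]]]]];
  by rewrite /= ?mulr0 // /norm2; ring.
Qed.

Lemma bvec_pauliB n1 n2 n3 s : bvec (pauliB n1 n2 n3 s) = reflB n1 n2 n3 (bvec s).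
Proof.
apply: boolp.funext; case: s => * [|[|[|[|[|[|[|[|[|[|[|[|[|[|[|[|[|i]]]]]]]]]]]]]]]]];
  by rewrite /= ?mulr0 // /norm2; ring.
Qed.

Lemma bvec_spin_flip s : bvec (spin_flip s) = flip_local (bvec s).
Proof.
apply: boolp.funext; case: s => * [|[|[|[|[|[|[|[|[|[|[|[|[|[|[|[|[|i]]]]]]]]]]]]]]]]];
  by rewrite /flip_local /= // /norm2; ring.
Qed.

Lemma bvec_scale l s : bvec (scale l s) = (fun i => l ^+ 2 * bvec s i).
Proof.
apply: boolp.funext; case: s => * [|[|[|[|[|[|[|[|[|[|[|[|[|[|[|[|[|i]]]]]]]]]]]]]]]]];
  by rewrite /= ?mulr0 // /norm2; ring.
Qed.

Definition rotA (n1 n2 n3 : R) s :=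
  scale (Num.sqrt (n1 ^+ 2 + n2 ^+ 2 + n3 ^+ 2))^-1 (pauliA n1 n2 n3 s).
Definition rotB (n1 n2 n3 : R) s :=
  scale (Num.sqrt (n1 ^+ 2 + n2 ^+ 2 + n3 ^+ 2))^-1 (pauliB n1 n2 n3 s).

Lemma bvec_rotA n1 n2 n3 s : bvec (rotA n1 n2 n3 s) =
  (fun i => reflA n1 n2 n3 (bvec s) i / (n1 ^+ 2 + n2 ^+ 2 + n3 ^+ 2)).
Proof.
apply: boolp.funext => i.
by rewrite bvec_scale bvec_pauliA exprVn sqr_sqrtr ?addr_ge0 ?sqr_ge0 // mulrC.
Qed.

Lemma bvec_rotB n1 n2 n3 s : bvec (rotB n1 n2 n3 s) =
  (fun i => reflB n1 n2 n3 (bvec s) i / (n1 ^+ 2 + n2 ^+ 2 + n3 ^+ 2)).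
Proof.
apply: boolp.funext => i.
by rewrite bvec_scale bvec_pauliB exprVn sqr_sqrtr ?addr_ge0 ?sqr_ge0 // mulrC.
Qed.

End LocalOperations.

Section Centers.
Variable R : realType.
Implicit Types (s : coords R) (b : nat -> R).

Lemma bvec_norm2 s : bvec s 1%N = norm2 s.
Proof. by case: s. Qed.

(* The centre of the range of b_i given b_1, ..., b_(i-1); it is 0 for the local
   components. Row 1 of C ranges over the section of a sphere by the plane
   r . beta = alpha_1, and when alpha_2 = alpha_3 = 0 row 2 ranges over one by the
   plane r . C_1 = 0: their entries are centred as in Dchi2_sphere_le. The other
   entries are determined by the earlier components. *)
Definition center (i : nat) b : R :=
  match i with
  | 8%N => b 5%N * b 2%N / beta_norm2 b
  | 9%N => b 6%N * (b 2%N - b 5%N * b 8%N) / (b 6%N ^+ 2 + b 7%N ^+ 2)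
  | 10%N => (b 2%N - b 5%N * b 8%N - b 6%N * b 9%N) / b 7%N
  | 11%N => (b 3%N * b 5%N - b 4%N * (b 6%N * b 10%N - b 7%N * b 9%N) - b 2%N * b 3%N * b 8%N)
            / alpha23_norm2 b
  | 12%N => if alpha23_norm2 b != 0 then
              (b 3%N * b 6%N - b 4%N * (b 7%N * b 8%N - b 5%N * b 10%N) - b 2%N * b 3%N * b 9%N)
              / alpha23_norm2 b
            else b 9%N * - (b 8%N * b 11%N) / (b 9%N ^+ 2 + b 10%N ^+ 2)
  | 13%N => if alpha23_norm2 b != 0 then
              (b 3%N * b 7%N - b 4%N * (b 5%N * b 9%N - b 6%N * b 8%N) - b 2%N * b 3%N * b 10%N)
              / alpha23_norm2 b
            else (- (b 8%N * b 11%N) - b 9%N * b 12%N) / b 10%N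
  | 14%N => b 4%N * b 5%N - (b 9%N * b 13%N - b 10%N * b 12%N)
  | 15%N => b 4%N * b 6%N - (b 10%N * b 11%N - b 8%N * b 13%N)
  | 16%N => b 4%N * b 7%N - (b 8%N * b 12%N - b 9%N * b 11%N)
  | _ => 0
  end.

Lemma center_prefix i b b' : (forall k, (1 <= k < i)%N -> b k = b' k) ->
  center i b = center i b'.
Proof.
case: i => [|[|[|[|[|[|[|[|[|[|[|[|[|[|[|[|[|i]]]]]]]]]]]]]]]]] eqb //=;
rewrite /beta_norm2 /alpha23_norm2;
by rewrite ?(eqb 2%N) ?(eqb 3%N) ?(eqb 4%N) ?(eqb 5%N) ?(eqb 6%N) ?(eqb 7%N) ?(eqb 8%N)
  ?(eqb 9%N) ?(eqb 10%N) ?(eqb 11%N) ?(eqb 12%N) ?(eqb 13%N) ?(eqb 14%N) ?(eqb 15%N).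
Qed.

Definition reflects_about_center (i : nat) := forall s, norm2 s = 1 ->
  exists s', [/\ norm2 s' = 1, (forall k, (1 <= k < i)%N -> bvec s' k = bvec s k) &
                 bvec s' i = 2 * center i (bvec s) - bvec s i].

Local Open Scope classical_set_scope.

Lemma compat_valuesE psi i v : (2 <= i <= 16)%N ->
  compat_values psi i v <-> exists s, [/\ norm2 s = 1,
    (forall k, (1 <= k < i)%N -> bvec s k = bvec (coords_of psi) k) & v = bvec s i].
Proof.
move=> /andP[i2 i16].
have bloch_bvec_lt k : (1 <= k < i)%N -> forall phi, bloch phi k = bvec (coords_of phi) k.
  by move=> /andP[k1 ki] phi; rewrite bloch_bvec // k1 (leq_trans (ltnW ki)).
have bloch_bvec_i phi : bloch phi i = bvec (coords_of phi) i.
  by rewrite bloch_bvec // i16 (leq_trans _ i2).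
split.
- case=> phi [/is_pureE pure_phi eq_phi] <-; exists (coords_of phi); split => //.
  by move=> k ki; rewrite -!bloch_bvec_lt ?eq_phi.
- case=> s [s1 eq_s ->]; exists (qvec_of s); last by rewrite bloch_bvec_i qvec_ofK.
  split; first by apply/is_pureE; rewrite qvec_ofK.
  by move=> k ki; rewrite !bloch_bvec_lt // qvec_ofK eq_s.
Qed.

Lemma hmid_center psi i : is_pure psi -> (2 <= i <= 16)%N -> reflects_about_center i ->
  hmid psi i = center i (bvec (coords_of psi)).
Proof.
move=> /is_pureE pure_psi i_range refl_i.
set S := compat_values psi i.
have S_psi : S (bvec (coords_of psi) i) by apply/compat_valuesE => //; exists (coords_of psi).
have S_le1 v : S v -> -1 <= v <= 1.
  by case/compat_valuesE => // s [s1 _ ->]; apply: pure_relations_le1 (bvec_pure s1) _.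
suff : bmax psi i + bmin psi i = 2 * center i (bvec (coords_of psi)) by rewrite /hmid => ->; lra.
apply: sup_add_inf_sym; first by exists (bvec (coords_of psi) i).
  by exists 1 => v /S_le1 /andP[].
move=> _ /compat_valuesE -/(_ i_range) [s [s1 eq_s ->]].
have [s' [s'1 eq_s' s'_i]] := refl_i s s1.
apply/compat_valuesE => //; exists s'; split => //; last by rewrite s'_i (center_prefix eq_s).
by move=> k ki; rewrite eq_s' ?eq_s.
Qed.

End Centers.

Ltac case_prefix :=
  move=> [|[|[|[|[|[|[|[|[|[|[|[|[|[|[|[|[|?]]]]]]]]]]]]]]]]] /andP[] // _ _.

Ltac bvec_simpl :=
  rewrite ?(bvec_pauliA, bvec_pauliB, bvec_spin_flip, bvec_rotA, bvec_rotB) /flip_local /=.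

Ltac reflection_goals s1 :=
  let P := fresh "P" in
  have P := bvec_pure s1; split;
  [ rewrite -bvec_norm2; bvec_simpl; rewrite (pure_norm P); field
  | case_prefix; bvec_simpl; rewrite ?(pure_norm P); field
  | bvec_simpl; field ].

Section Reflections.
Variable R : realType.
Implicit Types (s : coords R).

Lemma reflects2 : reflects_about_center R 2.
Proof. by move=> s s1; exists (pauliA 0 0 1 s); reflection_goals s1. Qed.

Lemma reflects3 : reflects_about_center R 3.
Proof. by move=> s s1; exists (pauliA 1 0 0 s); reflection_goals s1. Qed.

Lemma reflects4 : reflects_about_center R 4.
Proof. by move=> s s1; exists (pauliA 0 0 1 (spin_flip s)); reflection_goals s1. Qed.

Lemma reflects5 : reflects_about_center R 5.
Proof. by move=> s s1; exists (pauliB 0 0 1 s); reflection_goals s1. Qed.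

Lemma reflects6 : reflects_about_center R 6.
Proof. by move=> s s1; exists (pauliB 1 0 0 s); reflection_goals s1. Qed.

Lemma reflects7 : reflects_about_center R 7.
Proof.
move=> s s1; have P := bvec_pure s1.
have [/sqr_add2_eq0[b5 b6]|nz] := eqVneq (bvec s 5%N ^+ 2 + bvec s 6%N ^+ 2) 0.
  exists (pauliB 1 0 0 s); split.
  - by rewrite -bvec_norm2; bvec_simpl; rewrite (pure_norm P); ring.
  - by case_prefix; bvec_simpl; rewrite ?(pure_norm P) ?b5 ?b6; ring.
  - by bvec_simpl; rewrite ?b5 ?b6; ring.
exists (rotB (bvec s 5%N) (bvec s 6%N) 0 s); split.
- by rewrite -bvec_norm2; bvec_simpl; rewrite (pure_norm P); field_nz.
- by case_prefix; bvec_simpl; rewrite ?(pure_norm P); field_nz.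
- by bvec_simpl; field_nz.
Qed.

Lemma reflects8 : reflects_about_center R 8.
Proof.
move=> s s1; have P := bvec_pure s1.
have [/sqr_add3_eq0[b5 b6 b7]|nz] :=
  eqVneq (bvec s 5%N ^+ 2 + bvec s 6%N ^+ 2 + bvec s 7%N ^+ 2) 0.
  exists (pauliB 0 0 1 s); split.
  - by rewrite -bvec_norm2; bvec_simpl; rewrite (pure_norm P); ring.
  - by case_prefix; bvec_simpl; rewrite ?(pure_norm P) ?b5 ?b6 ?b7; ring.
  - by bvec_simpl; rewrite ?b5 ?b6 ?b7; ring.
exists (rotB (bvec s 5%N) (bvec s 6%N) (bvec s 7%N) s); split.
- by rewrite -bvec_norm2; bvec_simpl; rewrite (pure_norm P); field_nz.
- by case_prefix; bvec_simpl; rewrite ?(pure_norm P); field_nz.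
- by bvec_simpl; rewrite /beta_norm2 -(C_beta1 P); field_nz.
Qed.

Lemma orth_witness (x y : R) : exists a2 a3 : R,
  [/\ a2 * x + a3 * y = 0, a2 ^+ 2 + a3 ^+ 2 != 0,
     x ^+ 2 + y ^+ 2 != 0 -> a2 = y /\ a3 = - x &
     x ^+ 2 + y ^+ 2 = 0 -> a2 = 1 /\ a3 = 0].
Proof.
have [/sqr_add2_eq0[-> ->]|nz] := eqVneq (x ^+ 2 + y ^+ 2) 0.
  by exists 1, 0; split; rewrite ?eqxx //; [ring | rewrite expr1n expr2 mulr0 addr0 oner_eq0].
exists y, (- x); split => [||//|/eqP]; first by ring.
  by rewrite sqrrN addrC.
by rewrite (negPf nz).
Qed.

(* The spin flip negates alpha and beta; the two rotations by pi about axes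
   orthogonal to (alpha_2, alpha_3) and (beta_2, beta_3) negate them back, and act
   on the correlation matrix by reflections in its last two rows and columns. *)
Lemma bvec_double_rotation s (a2 a3 m2 m3 : R) :
  let b := bvec s in let b' := bvec (rotA 0 a2 a3 (rotB 0 m2 m3 (spin_flip s))) in
  a2 * b 3%N + a3 * b 4%N = 0 -> m2 * b 6%N + m3 * b 7%N = 0 ->
  a2 ^+ 2 + a3 ^+ 2 != 0 -> m2 ^+ 2 + m3 ^+ 2 != 0 ->
  [/\ forall k, (1 <= k <= 8)%N -> b' k = b k,
      b' 9%N = b 9%N - 2 * m2 * (m2 * b 9%N + m3 * b 10%N) / (m2 ^+ 2 + m3 ^+ 2),
      b' 10%N = b 10%N - 2 * m3 * (m2 * b 9%N + m3 * b 10%N) / (m2 ^+ 2 + m3 ^+ 2) &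
      a2 = 0 -> [/\ b' 11%N = b 11%N,
        b' 12%N = b 12%N - 2 * m2 * (m2 * b 12%N + m3 * b 13%N) / (m2 ^+ 2 + m3 ^+ 2) &
        b' 13%N = b 13%N - 2 * m3 * (m2 * b 12%N + m3 * b 13%N) / (m2 ^+ 2 + m3 ^+ 2)]].
Proof.
move=> b b'; rewrite {}/b' {}/b => a_orth m_orth nzA nzB; bvec_simpl.
move: (bvec s) a_orth m_orth => b a_orth m_orth.
have fix_orth (a v2 v3 : R) u2 u3 : u2 * v2 + u3 * v3 = 0 ->
    v2 - 2 * u2 * (u2 * v2 + u3 * v3) / a = v2 /\ v3 - 2 * u3 * (u2 * v2 + u3 * v3) / a = v3.
  by move=> ->; rewrite !(mulr0, mul0r, subr0).
have [a3_fix a4_fix] := fix_orth (a2 ^+ 2 + a3 ^+ 2) _ _ _ _ a_orth.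
have [b6_fix b7_fix] := fix_orth (m2 ^+ 2 + m3 ^+ 2) _ _ _ _ m_orth.
split.
- case=> [|[|[|[|[|[|[|[|[|k]]]]]]]]] // _ /=; try by field_nz.
  + by rewrite -[RHS]a3_fix; field_nz.
  + by rewrite -[RHS]a4_fix; field_nz.
  + by rewrite -[RHS]b6_fix; field_nz.
  + by rewrite -[RHS]b7_fix; field_nz.
- by field_nz.
- by field_nz.
- move=> a2_0; subst a2.
  have nz3 : a3 != 0 by apply: contraNneq nzA => ->; rewrite expr2 !mul0r addr0.
  by split; field_nz.
Qed.

Lemma sqr0_add_sqr1_neq0 : (0 : R) ^+ 2 + 1 ^+ 2 != 0.
Proof. by rewrite expr2 mul0r add0r expr1n oner_eq0. Qed.

Lemma reflects9 : reflects_about_center R 9.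
Proof.
move=> s s1; have P := bvec_pure s1.
have [a2 [a3 [a_orth nzA _ _]]] := orth_witness (bvec s 3%N) (bvec s 4%N).
have [m2 [m3 [m_orth nzB m_gen m_deg]]] := orth_witness (bvec s 6%N) (bvec s 7%N).
have [fix_le8 b'9 _ _] := bvec_double_rotation a_orth m_orth nzA nzB.
exists (rotA 0 a2 a3 (rotB 0 m2 m3 (spin_flip s))); split.
- by rewrite -bvec_norm2 fix_le8 // (pure_norm P).
- by move=> k /andP[k1 k9]; rewrite fix_le8 // k1.
rewrite b'9 /=.
have [beta23_0|nz] := eqVneq (bvec s 6%N ^+ 2 + bvec s 7%N ^+ 2) 0.
  have [-> ->] := m_deg beta23_0; have [-> ->] := sqr_add2_eq0 beta23_0.
  by rewrite !mul0r; field_nz.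
by have [-> ->] := m_gen nz; rewrite -(C_beta1 P); field_nz.
Qed.

Lemma reflects10 : reflects_about_center R 10.
Proof.
move=> s s1; have P := bvec_pure s1.
have [b7_0|nz] := eqVneq (bvec s 7%N) 0; last first.
  by exists s; split => //=; rewrite -(C_beta1 P); field_nz.
have [a2 [a3 [a_orth nzA _ _]]] := orth_witness (bvec s 3%N) (bvec s 4%N).
have m_orth : 0 * bvec s 6%N + 1 * bvec s 7%N = 0 by rewrite b7_0; ring.
have [fix_le8 b'9 b'10 _] := bvec_double_rotation a_orth m_orth nzA sqr0_add_sqr1_neq0.
exists (rotA 0 a2 a3 (rotB 0 0 1 (spin_flip s))); split.
- by rewrite -bvec_norm2 fix_le8 // (pure_norm P).
- move=> k /andP[k1 k10]; have [k8|k9] := leqP k 8; first by rewrite fix_le8 // k1.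
  have -> : k = 9%N by apply/eqP; rewrite eqn_leq -ltnS k10 k9.
  by rewrite b'9; ring.
by rewrite b'10 /= b7_0 invr0 mulr0; field_nz.
Qed.

Lemma reflects11 : reflects_about_center R 11.
Proof.
move=> s s1; have P := bvec_pure s1.
have [alpha23_0|nz] := eqVneq (alpha23_norm2 (bvec s)) 0; last first.
  by exists s; split => //=; rewrite -(row2_1 P); field_nz.
have [b3_0 b4_0] := sqr_add2_eq0 alpha23_0.
exists (pauliA 1 0 0 s); split.
- by rewrite -bvec_norm2; bvec_simpl; rewrite (pure_norm P); ring.
- by case_prefix; bvec_simpl; rewrite ?(pure_norm P) ?b3_0 ?b4_0; ring.
by bvec_simpl; rewrite alpha23_0 invr0 mulr0; ring.
Qed.

Lemma reflects12 : reflects_about_center R 12.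
Proof.
move=> s s1; have P := bvec_pure s1.
have [alpha23_0|nz] := eqVneq (alpha23_norm2 (bvec s)) 0; last first.
  by exists s; split => //=; rewrite nz -(row2_2 P); field_nz.
have [b3_0 b4_0] := sqr_add2_eq0 alpha23_0.
have [m2 [m3 [m_orthC nzB m_gen m_deg]]] := orth_witness (bvec s 9%N) (bvec s 10%N).
have a_orth : 0 * bvec s 3%N + 1 * bvec s 4%N = 0 by rewrite b4_0; ring.
have m_orth : m2 * bvec s 6%N + m3 * bvec s 7%N = 0.
  rewrite -(CT_alpha2 P) -(CT_alpha3 P) b3_0 b4_0.
  transitivity (bvec s 2%N * (m2 * bvec s 9%N + m3 * bvec s 10%N)); first by ring.
  by rewrite m_orthC mulr0.
have [fix_le8 b'9 b'10 rows2] := bvec_double_rotation a_orth m_orth sqr0_add_sqr1_neq0 nzB.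
have [b'11 b'12 _] := rows2 erefl.
exists (rotA 0 0 1 (rotB 0 m2 m3 (spin_flip s))); split.
- by rewrite -bvec_norm2 fix_le8 // (pure_norm P).
- move=> k /andP[k1 k12]; have [k8|k9] := leqP k 8; first by rewrite fix_le8 // k1.
  case: k k1 k12 k9 => [|[|[|[|[|[|[|[|[|[|[|[|k]]]]]]]]]]]] // _ _ _.
  + by rewrite b'9 m_orthC mulr0 mul0r subr0.
  + by rewrite b'10 m_orthC mulr0 mul0r subr0.
rewrite b'12 /= alpha23_0 eqxx /=.
have [C1_0|nzC] := eqVneq (bvec s 9%N ^+ 2 + bvec s 10%N ^+ 2) 0.
  have [-> ->] := m_deg C1_0; have [-> ->] := sqr_add2_eq0 C1_0.
  by rewrite !(mulr0, mul0r, oppr0); field_nz.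
have [-> ->] := m_gen nzC.
transitivity (2 * (bvec s 9%N * - (bvec s 8%N * bvec s 11%N)
                   / (bvec s 9%N ^+ 2 + bvec s 10%N ^+ 2)) - bvec s 12%N
  + 2 * bvec s 9%N * (bvec s 8%N * bvec s 11%N + bvec s 9%N * bvec s 12%N
                      + bvec s 10%N * bvec s 13%N) / (bvec s 9%N ^+ 2 + bvec s 10%N ^+ 2)).
  by field_nz.
by rewrite (CCT12 P) b3_0 !mulr0 mul0r addr0.
Qed.

Lemma reflects13 : reflects_about_center R 13.
Proof.
move=> s s1; have P := bvec_pure s1.
have [alpha23_0|nz] := eqVneq (alpha23_norm2 (bvec s)) 0; last first.
  by exists s; split => //=; rewrite nz -(row2_3 P); field_nz.
have [b3_0 b4_0] := sqr_add2_eq0 alpha23_0.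
have C12 := CCT12 P; rewrite b3_0 mulr0 in C12.
have [b10_0|nz10] := eqVneq (bvec s 10%N) 0; last first.
  exists s; split => //=; rewrite alpha23_0 eqxx /=.
  transitivity (2 * ((- (bvec s 8%N * bvec s 11%N) - bvec s 9%N * bvec s 12%N) / bvec s 10%N)
    - bvec s 13%N + 2 * (bvec s 8%N * bvec s 11%N + bvec s 9%N * bvec s 12%N
                         + bvec s 10%N * bvec s 13%N) / bvec s 10%N).
    by field_nz.
  by rewrite C12 mulr0 mul0r addr0.
have a_orth : 0 * bvec s 3%N + 1 * bvec s 4%N = 0 by rewrite b4_0; ring.
have m_orth : 0 * bvec s 6%N + 1 * bvec s 7%N = 0.
  by rewrite -(CT_alpha3 P) b3_0 b4_0 b10_0; ring.
have [fix_le8 b'9 b'10 rows2] :=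
  bvec_double_rotation a_orth m_orth sqr0_add_sqr1_neq0 sqr0_add_sqr1_neq0.
have [b'11 b'12 b'13] := rows2 erefl.
exists (rotA 0 0 1 (rotB 0 0 1 (spin_flip s))); split.
- by rewrite -bvec_norm2 fix_le8 // (pure_norm P).
- move=> k /andP[k1 k13]; have [k8|k9] := leqP k 8; first by rewrite fix_le8 // k1.
  case: k k1 k13 k9 => [|[|[|[|[|[|[|[|[|[|[|[|[|k]]]]]]]]]]]]] // _ _ _.
  + by rewrite b'9 b10_0; ring.
  + by rewrite b'10 b10_0; ring.
  + by rewrite b'12; ring.
by rewrite b'13 /= alpha23_0 eqxx /= b10_0 invr0 mulr0; field_nz.
Qed.

Lemma reflects14 : reflects_about_center R 14.
Proof. by move=> s s1; exists s; split => //=; rewrite -(row3_1 (bvec_pure s1)); ring. Qed.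

Lemma reflects15 : reflects_about_center R 15.
Proof. by move=> s s1; exists s; split => //=; rewrite -(row3_2 (bvec_pure s1)); ring. Qed.

Lemma reflects16 : reflects_about_center R 16.
Proof. by move=> s s1; exists s; split => //=; rewrite -(row3_3 (bvec_pure s1)); ring. Qed.

Lemma reflects_all i : (2 <= i <= 16)%N -> reflects_about_center R i.
Proof.
case: i => [|[|[|[|[|[|[|[|[|[|[|[|[|[|[|[|[|i]]]]]]]]]]]]]]]]] // _.
exact: reflects2. exact: reflects3. exact: reflects4. exact: reflects5. exact: reflects6.
exact: reflects7. exact: reflects8. exact: reflects9. exact: reflects10. exact: reflects11.
exact: reflects12. exact: reflects13. exact: reflects14. exact: reflects15. exact: reflects16.
Qed.

End Reflections.

Section InformationBound.
Variable R : realType.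
Implicit Types (b : nat -> R).

Local Notation info b m n := (\sum_(m <= i < n) Dchi2 (b i) (center i b)).

Lemma local_info b : info b 2 8 = alpha_norm2 b + beta_norm2 b.
Proof.
do 6 rewrite big_ltn //; rewrite big_geq // /= !Dchi2_0.
by rewrite /alpha_norm2 /beta_norm2; ring.
Qed.

Lemma row1_info_le b : pure_relations b -> info b 8 11 <= 1 - alpha_norm2 b.
Proof.
move=> P; do 3 rewrite big_ltn //; rewrite big_geq // addr0 addrA /=.
have row1_le1 : b 8%N ^+ 2 + b 9%N ^+ 2 + b 10%N ^+ 2 <= 1.
  by have := CCT11 P; rewrite /alpha_norm2; nra.
apply: le_trans (Dchi2_sphere_le (C_beta1 P) row1_le1) _.
rewrite -/(beta_norm2 b) -(alpha_beta_norm2 P) (CCT11 P).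
suff : b 2%N ^+ 2 <= b 2%N ^+ 2 / alpha_norm2 b by lra.
have [/sqr_add3_eq0[-> _ _]|nzA] := eqVneq (alpha_norm2 b) 0; first by rewrite expr0n /= mul0r.
rewrite ler_pdivlMr ?ler_piMr ?sqr_ge0 ?(alpha_norm2_le1 P) //.
by rewrite lt_def nzA addr_ge0 ?addr_ge0 ?sqr_ge0.
Qed.

Lemma row2_info_le b : pure_relations b -> info b 11 14 <= 1 - alpha_norm2 b.
Proof.
move=> P; do 3 rewrite big_ltn //; rewrite big_geq // addr0 addrA /=.
have [alpha23_0|nz] := eqVneq (alpha23_norm2 b) 0; last first.
  have divK y : alpha23_norm2 b * y / alpha23_norm2 b = y by rewrite mulrC mulKf.
  rewrite /= -(row2_1 P) -(row2_2 P) -(row2_3 P) !divK !Dchi2_id !addr0.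
  by rewrite subr_ge0 (alpha_norm2_le1 P).
have [b3_0 _] := sqr_add2_eq0 alpha23_0.
have row2_k : b 11%N * b 8%N + b 12%N * b 9%N + b 13%N * b 10%N = 0.
  by move: (CCT12 P); rewrite b3_0 mulr0 => <-; ring.
have row2_le1 : b 11%N ^+ 2 + b 12%N ^+ 2 + b 13%N ^+ 2 <= 1.
  by rewrite (CCT22 P) b3_0 expr0n /= addr0 gerBl /alpha_norm2 !addr_ge0 ?sqr_ge0.
have := Dchi2_sphere_le row2_k row2_le1.
rewrite alpha23_0 invr0 !mulr0 !mul0r /= !sub0r expr0n /= mul0r subr0.
by rewrite (CCT22 P) b3_0 expr0n /= addr0.
Qed.

Lemma row3_info b : pure_relations b -> info b 14 17 = 0.
Proof.
move=> P; do 3 rewrite big_ltn //; rewrite big_geq //= .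
by rewrite -(row3_1 P) -(row3_2 P) -(row3_3 P) !Dchi2_id !addr0.
Qed.

Lemma info_le2 b : pure_relations b -> info b 2 17 <= 2.
Proof.
move=> P.
rewrite (@big_cat_nat _ _ _ 8 2 17) // (@big_cat_nat _ _ _ 11 8 17) //.
rewrite (@big_cat_nat _ _ _ 14 11 17) //=.
rewrite local_info (row3_info P) -(alpha_beta_norm2 P).
have := row1_info_le P; have := row2_info_le P; lra.
Qed.

End InformationBound.

Section Attainment.
Variable R : realType.

Lemma I_chi2_postE (psi : qvec R) : is_pure psi ->
  I_chi2_post psi
  = \sum_(2 <= i < 17) Dchi2 (bvec (coords_of psi) i) (center i (bvec (coords_of psi))).
Proof.
move=> pure_psi; apply: eq_big_nat => i /andP[i2 i17].
have i_range : (2 <= i <= 16)%N by rewrite i2 -ltnS.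
rewrite bloch_bvec ?(leq_trans _ i2) // hmid_center //; exact: reflects_all.
Qed.

Definition max_entangled : coords R := Coords (2^-1) (2^-1) (2^-1) (- 2^-1) 0 0 0 0.

Lemma bvec_max_entangled :
  bvec max_entangled = fun i => if i \in [:: 1; 10; 12; 14]%N then 1 else 0.
Proof.
apply: boolp.funext => -[|[|[|[|[|[|[|[|[|[|[|[|[|[|[|[|[|i]]]]]]]]]]]]]]]]] //=;
  by rewrite /norm2; field; rewrite ?pnatr_eq0.
Qed.

Lemma info_max_entangled :
  \sum_(2 <= i < 17) Dchi2 (bvec max_entangled i) (center i (bvec max_entangled)) = 2.
Proof.
rewrite bvec_max_entangled; do 15 rewrite big_ltn //; rewrite big_geq //= !expr0n /=.
rewrite !(mul0r, mulr0, add0r, addr0, subr0, sub0r, oppr0, invr0, eqxx, mul1r) /=.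
by rewrite !if_same opprK Dchi2_id !Dchi2_0 expr0n expr1n /=; ring.
Qed.

End Attainment.

Theorem theorem1 (R : realType) :
  (forall psi : qvec R, is_pure psi -> I_chi2_post psi <= 2) /\
  (exists psi : qvec R, is_pure psi /\ I_chi2_post psi = 2).
Proof.
split=> [psi pure_psi | ].
  rewrite I_chi2_postE //; apply/info_le2/bvec_pure; exact/is_pureE.
have pure_me : is_pure (qvec_of (max_entangled R)).
  by apply/is_pureE; rewrite qvec_ofK -bvec_norm2 bvec_max_entangled.
by exists (qvec_of (max_entangled R)); rewrite I_chi2_postE // qvec_ofK info_max_entangled.
Qed.
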